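(* Let $n\ge 1$ and let $S=\{w_1,\dots,w_s\}\subset\mathbb{C}^n$ be a unitary 2-design. Then \[ \mathrm{MM}_n = \mathbf{1}\otimes\mathbf{1}\otimes\mathbf{1} + \frac{n^3}{s^3}\sum_{\substack{i,j,k\in\{1,\dots,s\}\\ \text{pairwise distinct}}} |w_i\rangle\langle w_j - w_i| \otimes |w_j\rangle\langle w_k - w_j| \otimes |w_k\rangle\langle w_i - w_k| . \]
   Context: For $u, v \in \mathbb{C}^n$, $|u\rangle\langle v|$ denotes the $n\times n$ matrix whose $(i,j)$ entry is $u_i \overline{v_j}$. Let $e_1,\dots,e_n$ be the standard basis of $\mathbb{C}^n$ and $E_{ab} = |e_a\rangle\langle e_b|$. The matrix multiplication tensor is $\mathrm{MM}_n = \sum_{a,b,c=1}^n E_{ab}\otimes E_{bc}\otimes E_{ca} \in \mathbb{C}^{n\times n}\otimes\mathbb{C}^{n\times n}\otimes\mathbb{C}^{n\times n}$; $\mathbf{1}$ is the $n\times n$ identity matrix. A finite set $S = \{w_1,\dots,w_s\} \subset \mathbb{C}^n$ is a unitary 2-design if $\sum_{i=1}^s w_i = 0$ and $\frac{1}{s}\sum_{i=1}^s |w_i\rangle\langle w_i| = \frac{1}{n}\mathbf{1}$. *)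

(* The field C^n is modelled by an arbitrary
   numClosedFieldType C (algebraically closed field with complex conjugation). *)
From HB Require Import structures.
From mathcomp Require Import all_boot all_order all_algebra.
Set Implicit Arguments. Unset Strict Implicit. Unset Printing Implicit Defensive.
Import Order.TTheory GRing.Theory Num.Theory.
Local Open Scope ring_scope.

Definition ketbra (C : numClosedFieldType) (n : nat) (u v : 'cV[C]_n) : 'M[C]_n :=
  \matrix_(i, j) (u i 0 * (v j 0)^*).

(* Elements of C^{nxn} (x) C^{nxn} (x) C^{nxn} as coefficient arrays indexed by
   ((a,b),(c,d),(e,f)); the elementary tensor A (x) B (x) D has entries
   A a b * B c d * D e f. *)
Definition tensor3 (C : numClosedFieldType) (n : nat) :=
  {ffun ('I_n * 'I_n) * ('I_n * 'I_n) * ('I_n * 'I_n) -> C}.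

Definition tens3 (C : numClosedFieldType) (n : nat) (A B D : 'M[C]_n) : tensor3 C n :=
  [ffun p => A p.1.1.1 p.1.1.2 * B p.1.2.1 p.1.2.2 * D p.2.1 p.2.2].

Definition MM (C : numClosedFieldType) (n : nat) : tensor3 C n :=
  \sum_(a < n) \sum_(b < n) \sum_(c < n)
     tens3 (delta_mx a b) (delta_mx b c) (delta_mx c a).

Definition unitary_2design (C : numClosedFieldType) (n s : nat) (w : 'I_s -> 'cV[C]_n) : Prop :=
  injective w /\
  \sum_(i < s) w i = 0 /\
  (s%:R)^-1 *: (\sum_(i < s) ketbra (w i) (w i)) = (n%:R)^-1 *: (1%:M : 'M[C]_n).

Definition tscale (C : numClosedFieldType) (n : nat) (c : C) (T : tensor3 C n) : tensor3 C n :=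
  [ffun p => c * T p].

(* Entrywise, the claimed identity is a scalar identity for triple sums.  The
   summand vanishes when two of i, j, k coincide, so the sum may run over all
   triples.  Expanding the three differences, every monomial in which one of
   the indices appears only through w gives zero because the w_i sum to 0; the
   two remaining monomials factor into three Gram sums, which the 2-design
   condition evaluates to (s/n) delta.  What is left is
   delta_fa delta_bc delta_de - delta_ab delta_cd delta_ef, and adding the
   identity tensor leaves the entry of MM_n. *)

From HB Require Import structures.
From mathcomp Require Import all_boot all_order all_algebra.
From mathcomp Require Import ring.
Set Implicit Arguments.
Unset Strict Implicit.
Unset Printing Implicit Defensive.

Import Order.TTheory GRing.Theory Num.Theory.
Local Open Scope ring_scope.

Section TripleSums.
Variables (R : comPzRingType) (s : nat).

Definition sum3 (F : 'I_s -> 'I_s -> 'I_s -> R) : R :=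
  \sum_(i < s) \sum_(j < s) \sum_(k < s) F i j k.

Lemma eq_sum3 F G : (forall i j k, F i j k = G i j k) -> sum3 F = sum3 G.
Proof.
by move=> eqFG; do 3![apply: eq_bigr => ? _]; apply: eqFG.
Qed.

Lemma sum3D F G : sum3 (fun i j k => F i j k + G i j k) = sum3 F + sum3 G.
Proof. by rewrite /sum3 -big_split; do 2![apply: eq_bigr => ? _; rewrite -big_split]. Qed.

Lemma sum3N F : sum3 (fun i j k => - F i j k) = - sum3 F.
Proof. by rewrite /sum3 -sumrN; do 2![apply: eq_bigr => ? _; rewrite -sumrN]. Qed.

Lemma sum3_mul F G H :
  sum3 (fun i j k => F i * G j * H k) = (\sum_i F i) * (\sum_j G j) * (\sum_k H k).
Proof.
rewrite /sum3 -mulrA big_distrl; apply: eq_bigr => i _.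
rewrite big_distrl big_distrr; apply: eq_bigr => j _.
by rewrite !big_distrr; apply: eq_bigr => k _; rewrite /= mulrA.
Qed.

Lemma sum3_cyclic_differences (x y z x' y' z' : 'I_s -> R) :
  \sum_i x i = 0 -> \sum_i y i = 0 -> \sum_i z i = 0 ->
  sum3 (fun i j k =>
    x i * (x' j - x' i) * (y j * (y' k - y' j)) * (z k * (z' i - z' k)))
  = (\sum_i x i * z' i) * (\sum_j y j * x' j) * (\sum_k z k * y' k)
  - (\sum_i x i * x' i) * (\sum_j y j * y' j) * (\sum_k z k * z' k).
Proof.
move=> x0 y0 z0.
(* The eight monomials of the summand, each a function of i times one of j
   times one of k. *)
rewrite (@eq_sum3 _ (fun i j k =>
      (x i * z' i) * (y j * x' j) * (z k * y' k)
    + - (x i * (y j * x' j) * (z k * y' k * z' k))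
    + - ((x i * z' i) * (y j * x' j * y' j) * z k)
    + x i * (y j * x' j * y' j) * (z k * z' k)
    + - ((x i * x' i * z' i) * y j * (z k * y' k))
    + (x i * x' i) * y j * (z k * y' k * z' k)
    + (x i * x' i * z' i) * (y j * y' j) * z k
    + - ((x i * x' i) * (y j * y' j) * (z k * z' k)))); last by move=> *; ring.
by rewrite !sum3D !sum3N !sum3_mul x0 y0 z0; ring.
Qed.

End TripleSums.

Lemma sum_distinct_triples (V : zmodType) s (F : 'I_s -> 'I_s -> 'I_s -> V) :
  (forall i k, F i i k = 0) -> (forall i j, F i j j = 0) ->
  (forall i j, F i j i = 0) ->
  \sum_(i < s) \sum_(j < s | j != i) \sum_(k < s | (k != i) && (k != j)) F i j k
  = \sum_(i < s) \sum_(j < s) \sum_(k < s) F i j k.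
Proof.
move=> Fiik Fijj Fiji; apply: eq_bigr => i _.
rewrite [RHS](bigID (fun j => j != i)) /= [X in _ + X]big1 ?addr0; last first.
  by move=> j /negbNE/eqP ->; rewrite big1.
apply: eq_bigr => j _.
rewrite [RHS](bigID (fun k => (k != i) && (k != j))) /= [X in _ + X]big1 ?addr0 //.
by move=> k; rewrite negb_and !negbK => /orP[] /eqP ->.
Qed.

Lemma sum_single (V : nmodType) m (F : 'I_m -> V) a :
  (forall x, x != a -> F x = 0) -> \sum_x F x = F a.
Proof. by move=> Fa; rewrite (bigD1 a) //= big1 ?addr0. Qed.

Section Tensors.
Variables (C : numClosedFieldType) (n : nat).
Implicit Types (u : 'cV[C]_n) (A B D : 'M[C]_n).

Lemma ketbra0 u : ketbra u 0 = 0.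
Proof. by apply/matrixP => i j; rewrite !mxE rmorph0 mulr0. Qed.

Lemma tens3_0l B D : tens3 0 B D = 0.
Proof. by apply/ffunP => p; rewrite !ffunE mxE !mul0r. Qed.

Lemma tens3_0m A D : tens3 A 0 D = 0.
Proof. by apply/ffunP => p; rewrite !ffunE mxE mulr0 mul0r. Qed.

Lemma tens3_0r A B : tens3 A B 0 = 0.
Proof. by apply/ffunP => p; rewrite !ffunE mxE mulr0. Qed.

Lemma MME a b c d e f :
  MM C n (a, b, (c, d), (e, f)) = (b == c)%:R * (d == e)%:R * (f == a)%:R.
Proof.
rewrite /MM !sum_ffunE (@sum_single _ _ _ a); last first.
  move=> x xa; rewrite sum_ffunE big1 // => y _; rewrite sum_ffunE big1 // => z _.
  by rewrite !ffunE /= !mxE (eq_sym a) (negbTE xa) /= !mul0r.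
rewrite sum_ffunE (@sum_single _ _ _ b); last first.
  move=> y yb; rewrite sum_ffunE big1 // => z _.
  by rewrite !ffunE /= !mxE (eq_sym b) (negbTE yb) andbF /= !mul0r.
rewrite sum_ffunE (@sum_single _ _ _ d); last first.
  by move=> z zd; rewrite !ffunE /= !mxE (eq_sym d) (negbTE zd) andbF /= mulr0 mul0r.
by rewrite !ffunE /= !mxE !eqxx /= andbT mul1r -mulnb natrM mulrA (eq_sym c b) (eq_sym e d).
Qed.

End Tensors.

Section TwoDesign.
Variables (C : numClosedFieldType) (n s : nat) (w : 'I_s -> 'cV[C]_n).
Hypothesis design : unitary_2design w.

Lemma design_sum_coord a : \sum_i w i a 0 = 0.
Proof.
case: design => _ [w0 _].
by have := congr1 (fun M : 'cV[C]_n => M a 0) w0; rewrite summxE mxE.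
Qed.

Lemma design_size_neq0 : (0 < n)%N -> s%:R != 0 :> C.
Proof.
case: design => _ [_ gram] n_gt0; apply/eqP => s0.
have := congr1 (fun M : 'M[C]_n => M (Ordinal n_gt0) (Ordinal n_gt0)) gram.
rewrite /= !mxE s0 invr0 mul0r eqxx mulr1n mulr1 => /esym/eqP.
by rewrite invr_eq0 pnatr_eq0 (gtn_eqF n_gt0).
Qed.

Lemma design_gram_coord a f : (0 < n)%N ->
  \sum_i w i a 0 * (w i f 0)^* = s%:R / n%:R * (a == f)%:R.
Proof.
move=> n_gt0; have s0 := design_size_neq0 n_gt0.
have n0 : n%:R != 0 :> C by rewrite pnatr_eq0 -lt0n.
case: design => _ [_ gram].
have := congr1 (fun M : 'M[C]_n => M a f) gram.
rewrite /= !mxE summxE (eq_bigr (fun i => w i a 0 * (w i f 0)^*)) => [gram_af|i _].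
  by apply: (mulfI (invr_neq0 s0)); rewrite gram_af; field; apply/andP.
by rewrite mxE.
Qed.

End TwoDesign.

Theorem mainTheorem2 (C : numClosedFieldType) (n s : nat) (hn : (1 <= n)%N)
  (w : 'I_s -> 'cV[C]_n) (hS : unitary_2design w) :
  MM C n =
    tens3 (1%:M) (1%:M) (1%:M)
    + tscale ((n%:R ^+ 3) / (s%:R ^+ 3) : C)
        (\sum_(i < s) \sum_(j < s | j != i) \sum_(k < s | (k != i) && (k != j))
          tens3 (ketbra (w i) (w j - w i))
                (ketbra (w j) (w k - w j))
                (ketbra (w k) (w i - w k))).
Proof.
rewrite sum_distinct_triples => [|i k|i j|i j]; last 3 first.
- by rewrite subrr ketbra0 tens3_0l.
- by rewrite subrr ketbra0 tens3_0m.
- by rewrite subrr ketbra0 tens3_0r.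
apply/ffunP => -[[[a b] [c d]] [e f]].
rewrite MME !ffunE !sum_ffunE.
under eq_bigr do (rewrite sum_ffunE; under eq_bigr do rewrite sum_ffunE).
under eq_bigr do (under eq_bigr do (under eq_bigr do rewrite ffunE /= !mxE !rmorphB)).
have := sum3_cyclic_differences (fun i => (w i b 0)^*) (fun i => (w i d 0)^*)
  (fun i => (w i f 0)^*) (design_sum_coord hS a) (design_sum_coord hS c)
  (design_sum_coord hS e).
rewrite /sum3 => ->.
rewrite !(design_gram_coord hS) // !mxE /= (eq_sym c b) (eq_sym e d) (eq_sym f a).
have n0 : n%:R != 0 :> C by rewrite pnatr_eq0 -lt0n.
by field; rewrite n0 (design_size_neq0 hS hn).
Qed.
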